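(* Let $\phi$ be an instance of \textsc{Max (2,3)-SAT} with $n$ variables and let $T_\phi$ be the tournament instance constructed from $\phi$ as described in the context. If $\phi$ admits an assignment that satisfies at least $k$ clauses, then $T_\phi$ has a seeding whose tournament value is at least $k+n$.
   Context: Tournament model: players form a finite set of size $2^{n'}$ totally ordered by strength (stronger beats weaker). A seeding is a bijection $\sigma$ from players to $[2^{n'}]$. In round $r=1,\dots,n'$, for each block of seed positions $\{(k-1)2^r+1,\dots,k2^r\}$, the winner $a$ of its first half $\{(k-1)2^r+1,\dots,(k-1)2^r+2^{r-1}\}$ plays the winner $b$ of its second half (a single-position block is won by the player seeded there), the stronger one wins the block, and the game has value $v(a,b,r)$. The tournament value is the sum of values of all games played. \textsc{Max (2,3)-SAT} instance: a CNF formula $\phi$ with variables $x_1,\dots,x_n$ and clauses $c_1,\dots,c_m$, each clause having exactly two literals and each variable appearing in at most three clauses; the occurrences of each variable $x$ as a literal are numbered $1,2,3$ (its $j$th appearance) in a fixed order. Construction of $T_\phi$: let $n'$ be the smallest integer with $16n\le 2^{n'}$ and $p=2^{n'}-16n$. Players: for each variable $x$, three variable players $x,x^T,x^F$; for each clause $c$, one clause player $c$; and dummy players $f_1,\dots,f_{13n+p-m}$. Strength order (strongest first): $x_1>x_1^T>x_1^F>x_2>x_2^T>x_2^F>\dots>x_n>x_n^T>x_n^F>c_1>\dots>c_m>f_1>\dots>f_{13n+p-m}$. Game values: for each variable $x$, $v(x,x^T,1)=v(x^T,x,1)=v(x,x^F,1)=v(x^F,x,1)=1$; for each clause $c$ and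 each literal of $c$ that is the $j$th appearance of variable $x$, if $x$ appears non-negated there set $v(c,x^T,j)=v(x^T,c,j)=1$, and otherwise set $v(c,x^F,j)=v(x^F,c,j)=1$; all other values $v(a,b,r)$ for $r\in[n']$ are $0$. *)

From mathcomp Require Import all_boot all_fingroup.
Set Implicit Arguments. Unset Strict Implicit. Unset Printing Implicit Defensive.

(* Players are the ordinals 'I_(2^K); player a is stronger than player b iff
   a < b (index 0 = strongest).  Seed positions are 0-indexed: position q here
   is seed q+1 of the paper.  A seeding sigma maps players to positions. *)

Definition stronger (N : nat) (a b : 'I_N) : 'I_N := if a < b then a else b.

Lemma pos0_proof (K : nat) : 0 < 2 ^ K.
Proof. by rewrite expn_gt0. Qed.

Definition pos0 (K : nat) : 'I_(2 ^ K) := Ordinal (pos0_proof K).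

Definition player_at (K : nat) (sigma : {perm 'I_(2 ^ K)}) (q : nat) : 'I_(2 ^ K) :=
  (sigma^-1)%g (insubd (pos0 K) q).

Fixpoint winner (K : nat) (sigma : {perm 'I_(2 ^ K)}) (r k : nat) : 'I_(2 ^ K) :=
  if r is r'.+1 then
    stronger (winner sigma r' k.*2) (winner sigma r' k.*2.+1)
  else player_at sigma k.

Definition tournament_value (K : nat) (v : 'I_(2 ^ K) -> 'I_(2 ^ K) -> nat -> nat)
  (sigma : {perm 'I_(2 ^ K)}) : nat :=
  \sum_(1 <= r < K.+1) \sum_(0 <= k < 2 ^ (K - r))
     v (winner sigma r.-1 k.*2) (winner sigma r.-1 k.*2.+1) r.

(* Variables 'I_n, clauses 'I_m; clause c has exactly two literals
   lit c false, lit c true; a literal is (variable, true iff non-negated).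
   occ c l : 'I_3 is (j - 1) where the literal (c,l) is the j-th appearance
   of its variable.  The numbering must be injective among the appearances of
   each variable, which also forces each variable to appear at most 3 times. *)
Definition occurrence_numbering (n m : nat) (lit : 'I_m -> bool -> 'I_n * bool)
  (occ : 'I_m -> bool -> 'I_3) : Prop :=
  forall (c c' : 'I_m) (l l' : bool),
    (lit c l).1 = (lit c' l').1 -> occ c l = occ c' l' -> c = c' /\ l = l'.

Definition clause_sat (n m : nat) (lit : 'I_m -> bool -> 'I_n * bool)
  (a : 'I_n -> bool) (c : 'I_m) : bool :=
  [exists l : bool, a (lit c l).1 == (lit c l).2].

Definition nprime (n : nat) : nat := up_log 2 (16 * n).

(* Player encoding (strength order = index order):
   index 3i, 3i+1, 3i+2 (i < n) : x_i, x_i^T, x_i^F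
   index 3n + j (j < m)         : clause c_j
   remaining indices            : dummies f_1, f_2, ... *)

(* v(x, x^T, 1) = v(x, x^F, 1) = 1 (one direction) *)
Definition var_game (n : nat) (a b r : nat) : bool :=
  [&& a < 3 * n, b < 3 * n, a %% 3 == 0, b %/ 3 == a %/ 3, b %% 3 != 0 & r == 1].

(* v(c, x^T, j) = 1 if the j-th appearance of x is a non-negated literal of c,
   v(c, x^F, j) = 1 if it is a negated literal of c (one direction) *)
Definition clause_game (n m : nat) (lit : 'I_m -> bool -> 'I_n * bool)
  (occ : 'I_m -> bool -> 'I_3) (a b r : nat) : bool :=
  [&& 3 * n <= a, a < 3 * n + m, b < 3 * n &
   [exists c : 'I_m, [exists l : bool,
      [&& val c == a - 3 * n, val (lit c l).1 == b %/ 3, (occ c l).+1 == r &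
          b %% 3 == (if (lit c l).2 then 1 else 2)]]]].

Definition Tphi_value (n m : nat) (lit : 'I_m -> bool -> 'I_n * bool)
  (occ : 'I_m -> bool -> 'I_3) (a b : 'I_(2 ^ nprime n)) (r : nat) : nat :=
  [|| var_game n a b r, var_game n b a r,
      clause_game lit occ a b r | clause_game lit occ b a r].

From mathcomp Require Import all_boot all_fingroup.
From mathcomp Require Import zify.
Set Implicit Arguments. Unset Strict Implicit. Unset Printing Implicit Defensive.

(* Seed each variable x in its own aligned block of 16 positions: the literal
   player of x made true by the assignment at offset 0, x itself at offset 8
   next to its false literal at offset 9, and a clause c at offset 2^(j-1)
   when c is satisfied through the j-th appearance of x (unsatisfied clauses
   are placed in the same way through a fixed literal).  The occurrence
   numbering makes these seeds pairwise distinct, and they all fit since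
   16 n <= 2^n'; the remaining seeds go to dummies, weaker than everybody.
   In round 1, x meets its false literal: one game of value 1 per variable.
   The sub-blocks of sizes 1, 2, 4 starting at offset 0 are won by the true
   literal, and the one of size 2^(j-1) starting at offset 2^(j-1) by the
   clause seeded there, so in round j the true literal meets that clause:
   one more game of value 1 per satisfied clause. *)

Lemma perm_extend (T : finType) (D : {set T}) (f : T -> T) :
  {in D &, injective f} -> exists s : {perm T}, {in D, s =1 f}.
Proof.
move=> injf; set eA := enum (~: D); set eB := enum (~: (f @: D)).
have size_eAB : size eA = size eB.
  rewrite /eA /eB -!cardE; have := cardsC D; have := cardsC (f @: D).
  by rewrite card_in_imset //; lia.
have nth_eB x : x \notin D -> nth x eB (index x eA) \in eB.
  by move=> xD; rewrite mem_nth // -size_eAB index_mem mem_enum inE.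
have f_eB x : x \in D -> f x \notin eB by move=> xD; rewrite mem_enum inE imset_f.
pose g x := if x \in D then f x else nth x eB (index x eA).
have injg : injective g.
  move=> u v; rewrite /g; case: ifPn => uD; case: ifPn => vD.
  - exact: injf.
  - by move=> fu; have := nth_eB v vD; rewrite -fu (negbTE (f_eB u uD)).
  - by move=> fv; have := nth_eB u uD; rewrite fv (negbTE (f_eB v vD)).
  - have uA : u \in eA by rewrite mem_enum inE.
    have vA : v \in eA by rewrite mem_enum inE.
    have ltu : index u eA < size eB by rewrite -size_eAB index_mem.
    have ltv : index v eA < size eB by rewrite -size_eAB index_mem.
    rewrite (set_nth_default v u ltu) => /eqP.
    by rewrite nth_uniq ?enum_uniq // => /eqP; apply: index_inj.
by exists (perm injg) => x xD; rewrite permE /g xD.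
Qed.

Lemma expn_sub_mul b k o i : o <= k -> b ^ (k - o) * i * b ^ o = b ^ k * i.
Proof. by move=> le_o; rewrite mulnAC -expnD subnK. Qed.

Section Bracket.
Variables (K : nat) (sigma : {perm 'I_(2 ^ K)}).

Lemma winner0 q (p : 'I_(2 ^ K)) : sigma p = q :> nat -> winner sigma 0 q = p.
Proof. by move=> <-; rewrite /= /player_at valKd permK. Qed.

Lemma winner_min r k : k.+1 * 2 ^ r <= 2 ^ K ->
  k * 2 ^ r <= sigma (winner sigma r k) < k.+1 * 2 ^ r /\
  forall p, k * 2 ^ r <= sigma p < k.+1 * 2 ^ r -> winner sigma r k <= p.
Proof.
elim: r k => [|r IH] k.
  rewrite expn0 !muln1 => ltk; have sk : sigma (player_at sigma k) = k :> nat.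
    by rewrite /player_at permKV val_insubd ltk.
  split=> [|p sp] /=; first lia.
  by rewrite -/(winner sigma 0 k) (@winner0 k p) //; lia.
rewrite expnS => ltk /=.
have [in_l min_l] := IH k.*2 ltac:(nia).
have [in_r min_r] := IH k.*2.+1 ltac:(nia).
rewrite /stronger; case: ifPn => [lt_lr | /negbTE ge_lr]; split; try nia;
  move=> p sp; case: (ltnP (sigma p) (k.*2.+1 * 2 ^ r)) => half.
- by apply: min_l; nia.
- by apply: leq_trans (ltnW lt_lr) (min_r _ _); nia.
- by apply: leq_trans (min_l _ _); [rewrite ltnNge in ge_lr; lia | nia].
- by apply: min_r; nia.
Qed.

Lemma winner_eq_below r k (w : 'I_(2 ^ K)) (bound : nat) : k.+1 * 2 ^ r <= 2 ^ K ->
  k * 2 ^ r <= sigma w < k.+1 * 2 ^ r -> w < bound ->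
  (forall p, k * 2 ^ r <= sigma p < k.+1 * 2 ^ r -> p < bound -> p = w) ->
  winner sigma r k = w.
Proof.
move=> ltk in_w lt_w only_w; have [in_win min_win] := @winner_min r k ltk.
apply: val_inj; apply/eqP; rewrite eqn_leq min_win //=.
case: (ltnP (winner sigma r k) bound) => [/(only_w _ in_win) -> // |].
by move/(leq_trans lt_w)/ltnW.
Qed.

End Bracket.

Lemma tournament_value_ge K (v : 'I_(2 ^ K) -> 'I_(2 ^ K) -> nat -> nat)
    (sigma : {perm 'I_(2 ^ K)}) (S : seq (nat * nat)) : uniq S ->
  (forall g, g \in S -> [/\ 0 < g.1 <= K, g.2.+1 * 2 ^ g.1 <= 2 ^ K &
     0 < v (winner sigma g.1.-1 g.2.*2) (winner sigma g.1.-1 g.2.*2.+1) g.1]) ->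
  size S <= tournament_value v sigma.
Proof.
move=> uS game_S; rewrite /tournament_value.
pose F r k := v (winner sigma r.-1 k.*2) (winner sigma r.-1 k.*2.+1) r.
set games := [seq (r, k) | r <- index_iota 1 K.+1, k <- index_iota 0 (2 ^ (K - r))].
have -> : \sum_(1 <= r < K.+1) \sum_(0 <= k < 2 ^ (K - r)) F r k =
          \sum_(g <- games) F g.1 g.2 by rewrite big_allpairs_dep.
apply: (@leq_trans (\sum_(g <- games | g \in S) 1)).
  rewrite sum1_count -size_filter; apply: uniq_leq_size => // g gS.
  rewrite mem_filter gS /=; have [rg kg _] := game_S g gS.
  apply/allpairsPdep; exists g.1, g.2; split; last by case: g {gS rg kg}.
    by rewrite mem_index_iota; lia.
  have pow_gt0 : 0 < 2 ^ g.1 by rewrite expn_gt0.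
  rewrite mem_index_iota /= -(ltn_pmul2r pow_gt0) -expnD subnK.
    by apply: leq_trans kg; rewrite mulSn addnC -addn1 leq_add2l.
  by case/andP: rg.
by rewrite big_mkcond /=; apply: leq_sum => g _; case: ifP => // /game_S [].
Qed.

Section Seeding.
Variables (n m : nat) (lit : 'I_m -> bool -> 'I_n * bool) (occ : 'I_m -> bool -> 'I_3).
Hypothesis Hocc : occurrence_numbering lit occ.
Variable a : 'I_n -> bool.

Lemma literals_le : 2 * m <= 3 * n.
Proof.
have inj_lit : injective (fun x : 'I_m * bool => ((lit x.1 x.2).1, occ x.1 x.2)).
  by move=> [c l] [c' l'] [/Hocc eq_var /eq_var [-> ->]].
by have := leq_card _ inj_lit; rewrite !card_prod !card_ord card_bool; lia.
Qed.

Definition true_side (c : 'I_m) : bool := a (lit c false).1 != (lit c false).2.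
Definition clause_var (c : 'I_m) : 'I_n := (lit c (true_side c)).1.
Definition clause_occ (c : 'I_m) : 'I_3 := occ c (true_side c).

Lemma true_sideP c : clause_sat lit a c -> a (clause_var c) = (lit c (true_side c)).2.
Proof.
rewrite /clause_var /true_side; case: eqP => [-> // | ne_false].
by case/existsP => -[] /eqP.
Qed.

Lemma clause_var_occ_inj c c' :
  clause_var c = clause_var c' -> clause_occ c = clause_occ c' -> c = c'.
Proof. by move=> eq_var /(Hocc eq_var) []. Qed.

Definition true_lit (i : 'I_n) : nat := 3 * i + (if a i then 1 else 2).
Definition false_lit (i : 'I_n) : nat := 3 * i + (if a i then 2 else 1).
Definition clause_player (c : 'I_m) : nat := 3 * n + c.

(* The offset of player 3 i + t, where t = 0, 1, 2 stands for x_i, x_i^T, x_i^F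
   and b is the value of x_i. *)
Definition var_offset (t : nat) (b : bool) : nat :=
  if t == 0 then 8 else if (t == 1) == b then 0 else 9.

Definition nat_assignment (j : nat) : bool := if insub j is Some i then a i else false.

Definition seed (p : nat) : nat :=
  if p < 3 * n then 16 * (p %/ 3) + var_offset (p %% 3) (nat_assignment (p %/ 3))
  else if insub (p - 3 * n) is Some c then 16 * clause_var c + 2 ^ clause_occ c
  else 0.

Variant seed_spec (p : nat) : nat -> Prop :=
| SeedVar (i : 'I_n) t of t < 3 & p = 3 * i + t : seed_spec p (16 * i + var_offset t (a i))
| SeedClause (c : 'I_m) of p = clause_player c :
    seed_spec p (16 * clause_var c + 2 ^ clause_occ c).

Lemma seed_var (i : 'I_n) t : t < 3 -> seed (3 * i + t) = 16 * i + var_offset t (a i).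
Proof.
move=> lt_t; have lt_i := ltn_ord i.
rewrite /seed ifT; last by lia.
have -> : (3 * i + t) %/ 3 = i by lia.
have -> : (3 * i + t) %% 3 = t by lia.
by rewrite /nat_assignment valK.
Qed.

Lemma seed_clause c : seed (clause_player c) = 16 * clause_var c + 2 ^ clause_occ c.
Proof.
rewrite /seed /clause_player ifN; last by lia.
by rewrite addKn valK.
Qed.

Lemma seedP p : p < 3 * n + m -> seed_spec p (seed p).
Proof.
move=> lt_p; case: (ltnP p (3 * n)) => [lt_var | le_var].
  have [i ->] : exists i : 'I_n, p = 3 * i + p %% 3.
    have lt_i : p %/ 3 < n by lia.
    by exists (Ordinal lt_i) => /=; lia.
  by rewrite seed_var ?ltn_pmod //; constructor; rewrite ?ltn_pmod.
have [c ->] : exists c : 'I_m, p = clause_player c.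
  have lt_c : p - 3 * n < m by lia.
  by exists (Ordinal lt_c); rewrite /clause_player /=; lia.
by rewrite seed_clause; constructor.
Qed.

Lemma var_offset_cases t b : var_offset t b = 0 \/ var_offset t b = 8 \/ var_offset t b = 9.
Proof. by rewrite /var_offset; case: (t == 0); case: (_ == b); auto. Qed.

Lemma exp2_occ (o : 'I_3) : 2 ^ o = 1 \/ 2 ^ o = 2 \/ 2 ^ o = 4.
Proof. by case: o => [[|[|[|o]]] lt_o] /=; auto. Qed.

Lemma seed_lt p : p < 3 * n + m -> seed p < 16 * n.
Proof.
case/seedP=> [i t _ _ | c _].
  by have := ltn_ord i; have := var_offset_cases t (a i); lia.
by have := ltn_ord (clause_var c); have := exp2_occ (clause_occ c); lia.
Qed.

Lemma seed_inj p p' : p < 3 * n + m -> p' < 3 * n + m -> seed p = seed p' -> p = p'.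
Proof.
rewrite /clause_player.
case/seedP=> [i t lt_t -> | c ->]; case/seedP=> [i' t' lt_t' -> | c' ->] eq_seed.
- have := var_offset_cases t (a i); have := var_offset_cases t' (a i') => off' off.
  have eq_i : i = i' by apply: val_inj => /=; lia.
  subst i'; have {eq_seed off off'} : var_offset t (a i) = var_offset t' (a i) by lia.
  rewrite /var_offset; case: (a i);
    by case: t lt_t => [|[|[|]]] //; case: t' lt_t' => [|[|[|]]].
- by have := var_offset_cases t (a i); have := exp2_occ (clause_occ c'); lia.
- by have := var_offset_cases t' (a i'); have := exp2_occ (clause_occ c); lia.
- have := exp2_occ (clause_occ c); have := exp2_occ (clause_occ c') => pow_c' pow_c.
  have eq_var : clause_var c = clause_var c' by apply: val_inj => /=; lia.
  have /eqP : 2 ^ clause_occ c = 2 ^ clause_occ c' by lia.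
  by rewrite eqn_exp2l // => /eqP /val_inj /(clause_var_occ_inj eq_var) ->.
Qed.

Local Notation K := (nprime n).

Lemma seeds_le : 16 * n <= 2 ^ K.
Proof. exact: up_logP. Qed.

Lemma players_le : 3 * n + m <= 2 ^ K.
Proof. by have := seeds_le; have := literals_le; lia. Qed.

Lemma nprime_ge4 : 0 < n -> 4 <= K.
Proof. by move=> n_gt0; rewrite -(@leq_exp2l 2) //; have := seeds_le; lia. Qed.

Definition player (q : nat) : 'I_(2 ^ K) := insubd (pos0 K) q.

Lemma val_player q : q < 2 ^ K -> player q = q :> nat.
Proof. by move=> lt_q; rewrite val_insubd lt_q. Qed.

Lemma exists_seeding : exists sigma : {perm 'I_(2 ^ K)},
  forall p : 'I_(2 ^ K), p < 3 * n + m -> sigma p = seed p :> nat.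
Proof.
have lt_seed p : p < 3 * n + m -> seed p < 2 ^ K.
  by move/seed_lt; have := seeds_le; lia.
have inj : {in [set p : 'I_(2 ^ K) | p < 3 * n + m] &,
             injective (fun p : 'I_(2 ^ K) => player (seed p))}.
  move=> p q; rewrite !inE => lt_p lt_q /(congr1 val) /=.
  by rewrite !val_player ?lt_seed // => /(seed_inj lt_p lt_q) /val_inj.
have [sigma sigmaE] := perm_extend inj.
by exists sigma => p lt_p; rewrite sigmaE ?inE //= val_player ?lt_seed.
Qed.

Lemma seed_true_lit i : seed (true_lit i) = 16 * i.
Proof. by rewrite /true_lit seed_var; case: (a i); rewrite ?addn0. Qed.

Lemma seed_var_player (i : 'I_n) : seed (3 * i) = 16 * i + 8.
Proof. by rewrite -[3 * i]addn0 seed_var. Qed.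

Lemma seed_false_lit i : seed (false_lit i) = 16 * i + 9.
Proof. by rewrite /false_lit seed_var; case: (a i). Qed.

Lemma seed_var_block p j : p < 3 * n -> 16 * j <= seed p < 16 * j + 8 -> seed p = 16 * j.
Proof.
move=> lt_p; have lt_p' : p < 3 * n + m by lia.
case: (seedP lt_p') => [i t _ _ | c p_c]; first by have := var_offset_cases t (a i); lia.
by move: lt_p; rewrite p_c /clause_player; lia.
Qed.

Lemma seed_clause_block p j (o : 'I_3) : p < 3 * n + m ->
  16 * j + 2 ^ o <= seed p < 16 * j + 2 * 2 ^ o -> seed p = 16 * j + 2 ^ o.
Proof.
move=> lt_p; have := exp2_occ o; case: (seedP lt_p) => [i t _ _ | c _].
  by have := var_offset_cases t (a i); lia.
by have := exp2_occ (clause_occ c); lia.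
Qed.

Section Seeded.
Variable sigma : {perm 'I_(2 ^ K)}.
Hypothesis sigma_seed : forall p : 'I_(2 ^ K), p < 3 * n + m -> sigma p = seed p :> nat.

Lemma seeded_at (p : 'I_(2 ^ K)) q : p < 3 * n + m -> q < 3 * n + m ->
  sigma p = seed q :> nat -> p = player q.
Proof.
move=> lt_p lt_q; rewrite sigma_seed // => /(seed_inj lt_p lt_q) eq_pq.
have lt_qK : q < 2 ^ K by have := players_le; lia.
by apply: val_inj; rewrite /= val_player.
Qed.

Lemma sigma_player q : q < 3 * n + m -> sigma (player q) = seed q :> nat.
Proof.
move=> lt_q; have lt_qK : q < 2 ^ K by have := players_le; lia.
by rewrite sigma_seed val_player.
Qed.

Lemma winner_true_lit (i : 'I_n) o : o < 3 ->
  winner sigma o (2 ^ (4 - o) * i) = player (true_lit i).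
Proof.
move=> lt_o; have lt_i := ltn_ord i; have le_seeds := seeds_le.
have lt_true : true_lit i < 3 * n by rewrite /true_lit; case: (a i); lia.
have pow_o : 0 < 2 ^ o <= 4 by rewrite expn_gt0 -[4]/(2 ^ 2) leq_exp2l; lia.
have start : 2 ^ (4 - o) * i * 2 ^ o = 16 * i by rewrite expn_sub_mul //; lia.
have sigma_true : sigma (player (true_lit i)) = 16 * i :> nat.
  by rewrite sigma_player ?seed_true_lit //; lia.
have stop : (2 ^ (4 - o) * i).+1 * 2 ^ o = 16 * i + 2 ^ o by rewrite mulSn start addnC.
apply: (winner_eq_below (bound := 3 * n)); rewrite ?start ?stop ?sigma_true ?val_player;
  try lia.
move=> p in_p lt_p; apply: seeded_at; [lia | lia |].
rewrite seed_true_lit sigma_seed; last by lia.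
by apply: seed_var_block; rewrite -?sigma_seed; lia.
Qed.

Lemma winner_clause c :
  winner sigma (clause_occ c) (2 ^ (4 - clause_occ c) * clause_var c).+1 =
  player (clause_player c).
Proof.
set v := clause_var c; set o := clause_occ c.
have lt_v := ltn_ord v; have le_seeds := seeds_le; have le_players := players_le.
have lt_c := ltn_ord c.
have lt_o : o <= 4 by have := ltn_ord o; lia.
have pow_o := exp2_occ o.
have start : (2 ^ (4 - o) * v).+1 * 2 ^ o = 16 * v + 2 ^ o.
  by rewrite mulSn expn_sub_mul // addnC.
have stop : (2 ^ (4 - o) * v).+2 * 2 ^ o = 16 * v + 2 * 2 ^ o.
  by rewrite !mulSn expn_sub_mul //; lia.
have sigma_c : sigma (player (clause_player c)) = 16 * v + 2 ^ o :> nat.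
  by rewrite sigma_player ?seed_clause // /clause_player; lia.
apply: (winner_eq_below (bound := 3 * n + m)); rewrite ?start ?stop ?sigma_c ?val_player;
  rewrite /clause_player; try lia.
move=> p in_p lt_p; apply: seeded_at; [lia | rewrite /clause_player; lia |].
rewrite seed_clause -/v -/o sigma_seed //.
by apply: seed_clause_block; rewrite -?sigma_seed; lia.
Qed.

Lemma var_game_pos (i : 'I_n) :
  0 < Tphi_value lit occ
        (winner sigma 0 (8 * i + 4).*2) (winner sigma 0 (8 * i + 4).*2.+1) 1.
Proof.
have lt_i := ltn_ord i; have le_seeds := seeds_le.
have lt_false : false_lit i < 3 * n by rewrite /false_lit; case: (a i); lia.
rewrite (@winner0 _ sigma _ (player (3 * i))); last first.
  by rewrite sigma_player ?seed_var_player; lia.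
rewrite (@winner0 _ sigma _ (player (false_lit i))); last first.
  by rewrite sigma_player ?seed_false_lit; lia.
rewrite /Tphi_value; suff -> : var_game n (player (3 * i)) (player (false_lit i)) 1 by [].
rewrite /var_game !val_player; try lia.
by rewrite /false_lit; case: (a i); repeat (apply/andP; split); lia.
Qed.

Lemma clause_game_pos c : clause_sat lit a c ->
  0 < Tphi_value lit occ
        (winner sigma (clause_occ c) (2 ^ (3 - clause_occ c) * clause_var c).*2)
        (winner sigma (clause_occ c) (2 ^ (3 - clause_occ c) * clause_var c).*2.+1)
        (clause_occ c).+1.
Proof.
move=> sat_c; have le_players := players_le; have lt_c := ltn_ord c.
have := true_sideP sat_c; rewrite -/(clause_var c).
set v := clause_var c; set o := clause_occ c => sat_v.
have lt_v := ltn_ord v; have lt_o : o < 3 := ltn_ord o.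
have lt_true : true_lit v < 3 * n by rewrite /true_lit; case: (a v); lia.
have -> : (2 ^ (3 - o) * v).*2 = 2 ^ (4 - o) * v.
  by rewrite -mul2n mulnA -expnS -subSn //; lia.
rewrite winner_true_lit // winner_clause -/v -/o /Tphi_value.
suff -> : clause_game lit occ (player (clause_player c)) (player (true_lit v)) o.+1.
  by rewrite !orbT.
rewrite /clause_game !val_player /clause_player; try lia.
apply/and4P; split; try lia.
apply/existsP; exists c; apply/existsP; exists (true_side c); apply/and4P; split => //.
- by rewrite addKn.
- by rewrite -/(clause_var c) -/v /true_lit; apply/eqP; case: (a v) => /=; lia.
- by rewrite -sat_v /true_lit; apply/eqP; case: (a v); lia.
Qed.

Lemma seeded_value_ge :
  n + #|[set c | clause_sat lit a c]| <= tournament_value (Tphi_value lit occ) sigma.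
Proof.
set sat := [set c | _].
pose var_games := [seq (1, 8 * i + 4) | i : 'I_n].
pose clause_games :=
  [seq ((clause_occ c).+1, 2 ^ (3 - clause_occ c) * clause_var c) | c in sat].
have -> : n + #|sat| = size (var_games ++ clause_games).
  by rewrite size_cat !size_map -enumT size_enum_ord -cardE.
have le_seeds := seeds_le.
apply: tournament_value_ge; first rewrite cat_uniq; first apply/and3P; first split.
- by rewrite map_inj_uniq ?enum_uniq // => i j [] eq_ij; apply: val_inj => /=; lia.
- apply/hasPn => _ /mapP [c _ ->]; apply/mapP => -[i _ [occ0 eq_k]].
  move: eq_k; have -> : clause_occ c = 0 :> nat by lia.
  by rewrite subn0; lia.
- rewrite map_inj_in_uniq ?enum_uniq // => c c' _ _ [eq_occ].
  rewrite (val_inj eq_occ) => /eqP; rewrite eqn_pmul2l ?expn_gt0 // => /eqP eq_var.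
  exact: clause_var_occ_inj (val_inj eq_var) (val_inj eq_occ).
move=> g; rewrite mem_cat => /orP [] /mapP.
  case=> i _ -> /=; have lt_i := ltn_ord i.
  have le4 := nprime_ge4 (leq_ltn_trans (leq0n _) lt_i).
  by split; [lia | lia | exact: var_game_pos].
case=> c; rewrite mem_enum inE => sat_c -> /=.
have lt_v := ltn_ord (clause_var c); have lt_o := ltn_ord (clause_occ c).
have le4 := nprime_ge4 (leq_ltn_trans (leq0n _) lt_v).
split; [lia | | exact: clause_game_pos].
have : 2 ^ (clause_occ c).+1 <= 8 by rewrite -[8]/(2 ^ 3) leq_exp2l.
rewrite mulSn -[3 - _]/(4 - (clause_occ c).+1) expn_sub_mul //; lia.
Qed.

End Seeded.
End Seeding.

Theorem lemma1 (n m : nat) (lit : 'I_m -> bool -> 'I_n * bool)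
  (occ : 'I_m -> bool -> 'I_3) (Hocc : occurrence_numbering lit occ) (k : nat) :
  (exists a : 'I_n -> bool, k <= #|[set c : 'I_m | clause_sat lit a c]|) ->
  exists sigma : {perm 'I_(2 ^ nprime n)},
    k + n <= tournament_value (Tphi_value lit occ) sigma.
Proof.
case=> a le_k; have [sigma sigma_seed] := exists_seeding Hocc a.
exists sigma; apply: leq_trans (seeded_value_ge Hocc sigma_seed).
by rewrite addnC leq_add2l.
Qed.
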